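(* Let $Y$ be a real normed linear space such that every non-zero approximately smooth element of $L(\ell_1^n,Y)$ is smooth. Then either $Y$ is smooth, or $Y$ is not approximately smooth.
   Context: $\ell_1^n$ is $\mathbb{R}^n$ with the $\ell_1$ norm; $L(\ell_1^n,Y)$ is the space of bounded linear operators with the operator norm. For a normed space $Z$ and $z\neq\theta$, $J(z)=\{\phi\in S_{Z^*}:\phi(z)=\|z\|\}$; $z$ is smooth if $J(z)$ is a singleton and $\varepsilon$-smooth if $\sup_{\phi,\psi\in J(z)}\|\phi-\psi\|\le\varepsilon$; an element is approximately smooth if it is $\varepsilon$-smooth for some $\varepsilon\in[0,2)$. The space $Z$ is smooth if every $z\in S_Z$ is smooth, and approximately smooth if there is $\varepsilon\in[0,2)$ such that every $z\in S_Z$ is $\varepsilon$-smooth. *)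

From HB Require Import structures.
From mathcomp Require Import all_boot all_order all_algebra.
From mathcomp Require Import all_classical all_reals all_analysis.
Set Implicit Arguments. Unset Strict Implicit. Unset Printing Implicit Defensive.
Import Order.TTheory GRing.Theory Num.Theory.
Import numFieldNormedType.Exports.
Local Open Scope classical_set_scope.
Local Open Scope ring_scope.

Section Smoothness.
Variables (R : realType) (V : lmodType R) (nrm : V -> R).

Definition fnorm (f : V -> R) : R :=
  sup [set `|f x| | x in [set x : V | nrm x <= 1]].

Definition is_dual (f : V -> R) : Prop :=
  (forall (a : R) (x y : V), f (a *: x + y) = a * f x + f y) /\
  (exists M : R, forall x, `|f x| <= M * nrm x).

Definition Jset (z : V) : set (V -> R) :=
  [set f | is_dual f /\ fnorm f = 1 /\ f z = nrm z].

Definition smooth_elt (z : V) : Prop := exists f, Jset z = [set f].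

Definition eps_smooth_elt (eps : R) (z : V) : Prop :=
  sup [set fnorm (fun x => f x - g x) | f in Jset z & g in Jset z] <= eps.

Definition approx_smooth_elt (z : V) : Prop :=
  exists eps : R, 0 <= eps < 2 /\ eps_smooth_elt eps z.

Definition smooth_space : Prop := forall z : V, nrm z = 1 -> smooth_elt z.

Definition approx_smooth_space : Prop :=
  exists eps : R, 0 <= eps < 2 /\ forall z : V, nrm z = 1 -> eps_smooth_elt eps z.

End Smoothness.

(* L(l_1^n, Y): a linear operator T : R^n -> Y is represented by the
   n-tuple of its values on the standard basis, T = (y_i)_i, acting as
   x |-> sum_i x_i y_i. *)
Definition l1norm (R : realType) (n : nat) (x : 'I_n -> R) : R :=
  \sum_(i < n) `|x i|.

Definition op_apply (R : realType) (Y : normedModType R) (n : nat)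
  (T : {ffun 'I_n -> Y}) (x : 'I_n -> R) : Y := \sum_(i < n) x i *: T i.

Definition opnorm_l1 (R : realType) (Y : normedModType R) (n : nat)
  (T : {ffun 'I_n -> Y}) : R :=
  sup [set `|op_apply T x| | x in [set x : 'I_n -> R | l1norm x <= 1]].

From HB Require Import structures.
From mathcomp Require Import all_boot all_order all_algebra.
From mathcomp Require Import all_classical all_reals all_analysis.
Import Order.TTheory GRing.Theory Num.Theory.
Import numFieldNormedType.Exports.
Set Implicit Arguments. Unset Strict Implicit. Unset Printing Implicit Defensive.
Local Open Scope classical_set_scope.
Local Open Scope ring_scope.

(** Embed [Y] into [L(l_1^n, Y)] by [y |-> (y, 0, ..., 0)].  A norming
   functional of [(z, 0, ..., 0)] with [||z|| = 1] must vanish on every operator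
   with first column [0]: moving along such a direction stays in the unit ball
   for a short while, so the functional cannot increase or decrease there.
   Hence it only depends on the first column, and [phi |-> phi \o (T |-> T 0)]
   is a bijection from [J(z)] onto [J(z, 0, ..., 0)] preserving the norms of
   differences.  If [Y] is [eps]-smooth, so is every [(z, 0, ..., 0)]; by
   hypothesis these are then smooth, and so is every [z]. *)

Section NormingFunctionals.
Variables (R : realType) (V : lmodType R) (nrm : V -> R).
Hypothesis nrm_ge0 : forall x, 0 <= nrm x.

Lemma dualD f x y : is_dual nrm f -> f (x + y) = f x + f y.
Proof. by move=> [f_lin _]; have := f_lin 1 x y; rewrite scale1r mul1r. Qed.

Lemma le_fnorm f x : is_dual nrm f -> nrm x <= 1 -> `|f x| <= fnorm nrm f.
Proof.
move=> [_ [M f_bd]] x1; apply: ub_le_sup; last by exists x.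
exists `|M| => _ [y y1 <-]; apply: (le_trans (f_bd y)).
apply: (le_trans (ler_norm _)); rewrite normrM (ger0_norm (nrm_ge0 y)).
by rewrite -[leRHS]mulr1 ler_wpM2l.
Qed.

Lemma norming_dual_flat_eq0 f x r t : is_dual nrm f -> fnorm nrm f = 1 ->
  f x = 1 -> 0 < t -> nrm (x + t *: r) <= 1 -> nrm (x - t *: r) <= 1 ->
  f r = 0.
Proof.
move=> fd f1 fx t_gt0 xr_le1 xNr_le1.
have le0 s : nrm (x + s *: r) <= 1 -> s * f r <= 0.
  move=> /(le_fnorm fd); rewrite f1 [x + _]addrC fd.1 fx.
  by move=> /(le_trans (ler_norm _)); rewrite gerDr.
have := le0 _ xr_le1; rewrite pmulr_rle0 // => fr_le0.
have := le0 (- t); rewrite scaleNr mulNr oppr_le0 pmulr_rge0 // => /(_ xNr_le1).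
by move=> fr_ge0; apply/le_anti; rewrite fr_le0 fr_ge0.
Qed.

End NormingFunctionals.

Section OperatorNorm.
Variables (R : realType) (Y : normedModType R) (n : nat).
Implicit Types (T : {ffun 'I_n -> Y}) (x : 'I_n -> R).

Lemma norm_op_apply_le T x c : 0 <= c -> (forall i, `|T i| <= c) ->
  l1norm x <= 1 -> `|op_apply T x| <= c.
Proof.
move=> c_ge0 T_le x1; apply: (le_trans (ler_norm_sum _ _ _)).
apply: (@le_trans _ _ (\sum_(i < n) `|x i| * c)).
  by apply: ler_sum => i _; rewrite normrZ ler_wpM2l.
by rewrite -mulr_suml -[leRHS]mul1r ler_wpM2r.
Qed.

Lemma opnorm_l1_le T c : 0 <= c -> (forall i, `|T i| <= c) -> opnorm_l1 T <= c.
Proof.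
move=> c_ge0 T_le; apply: ge_sup; last by move=> _ [x x1 <-]; exact: norm_op_apply_le.
exists 0, 0; last by rewrite /op_apply big1 ?normr0 // => i _; rewrite scale0r.
by rewrite /= /l1norm big1 // => i _; rewrite normr0.
Qed.

Lemma norm_le_opnorm_l1 T i : `|T i| <= opnorm_l1 T.
Proof.
apply: ub_le_sup.
  exists (\sum_(j < n) `|T j|) => _ [x x1 <-].
  apply: norm_op_apply_le => // [|j]; first exact: sumr_ge0.
  by rewrite (bigD1 j) //= lerDl sumr_ge0.
exists (fun j => (j == i)%:R).
  rewrite /= /l1norm (bigD1 i) //= eqxx normr1 big1 ?addr0 // => j /negbTE ->.
  by rewrite normr0.
rewrite /op_apply (bigD1 i) //= eqxx scale1r big1 ?addr0 // => j /negbTE ->.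
by rewrite scale0r.
Qed.

End OperatorNorm.

Section FirstColumn.
Variables (R : realType) (Y : normedModType R) (n : nat).
Local Notation V := {ffun 'I_n.+1 -> Y}.
Local Notation N := (@opnorm_l1 R Y n.+1).
Local Notation nY := (@Num.norm R Y).

Definition emb (y : Y) : V := [ffun i => if i == ord0 then y else 0].

Definition ext (h : Y -> R) : V -> R := fun T => h (T ord0).

Lemma emb_ord0 y : emb y ord0 = y.
Proof. by rewrite ffunE eqxx. Qed.

Lemma emb_eq0 y : (emb y == 0) = (y == 0).
Proof.
apply/eqP/eqP => [/(congr1 (fun T : V => T ord0))|->]; first by rewrite emb_ord0 ffunE.
by apply/ffunP => i; rewrite !ffunE if_same.
Qed.

Lemma opnorm_l1_ge0 T : 0 <= N T.
Proof. exact: le_trans (normr_ge0 _) (norm_le_opnorm_l1 T ord0). Qed.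

Lemma opnorm_emb y : N (emb y) = `|y|.
Proof.
apply/le_anti; rewrite -{3}(emb_ord0 y) norm_le_opnorm_l1 andbT.
by apply: opnorm_l1_le => // i; rewrite ffunE; case: eqP; rewrite ?normr0.
Qed.

Lemma ext_inj : injective ext.
Proof.
by move=> h k hk; apply: funext => y; have := congr1 (fun F => F (emb y)) hk;
  rewrite /ext emb_ord0.
Qed.

Lemma fnorm_ext h : fnorm N (ext h) = fnorm nY h.
Proof.
rewrite /fnorm; congr sup; apply/seteqP; split=> _ [T T1 <-].
  by exists (T ord0); rewrite //= (le_trans (norm_le_opnorm_l1 _ _)).
by exists (emb T); rewrite /= ?opnorm_emb // /ext emb_ord0.
Qed.

Lemma is_dual_ext h : is_dual N (ext h) <-> is_dual nY h.
Proof.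
split=> [[h_lin [M h_bd]] | [h_lin [M h_bd]]]; split.
- by move=> a x y; have := h_lin a (emb x) (emb y); rewrite /ext !ffunE eqxx.
- by exists M => y; have := h_bd (emb y); rewrite /ext opnorm_emb emb_ord0.
- by move=> a S T; rewrite /ext !ffunE.
- exists `|M| => T; apply: (le_trans (h_bd _)); apply: (le_trans (ler_norm _)).
  by rewrite normrM normr_id ler_wpM2l // norm_le_opnorm_l1.
Qed.

Lemma Jset_ext z h : Jset N (emb z) (ext h) <-> Jset nY z h.
Proof.
rewrite /Jset /= fnorm_ext opnorm_emb /ext emb_ord0.
by split=> -[/is_dual_ext hd hz]; split.
Qed.

Lemma Jset_emb_factor z f : `|z| = 1 -> Jset N (emb z) f ->
  f = ext (fun y => f (emb y)).
Proof.
move=> z1 [fd [f1 fz]].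
have f_flat (r : V) : r ord0 = 0 -> f r = 0.
  move=> r0; pose t := (1 + N r)^-1.
  have Nr1_gt0 : 0 < 1 + N r by rewrite ltr_pwDl ?opnorm_l1_ge0.
  have t_gt0 : 0 < t by rewrite invr_gt0.
  have ball s : `|s| <= t -> N (emb z + s *: r) <= 1.
    move=> st; apply: opnorm_l1_le => // i; rewrite !ffunE.
    case: eqP => [->|_]; first by rewrite r0 scaler0 addr0 z1.
    rewrite add0r normrZ -(mulVf (lt0r_neq0 Nr1_gt0)) ler_pM //.
    by rewrite (le_trans (norm_le_opnorm_l1 _ i)) // lerDr.
  apply: (norming_dual_flat_eq0 opnorm_l1_ge0 (x := emb z) fd f1 _ t_gt0).
  - by rewrite fz opnorm_emb.
  - by rewrite ball // gtr0_norm.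
  - by rewrite -scaleNr ball // normrN gtr0_norm.
apply: funext => T; rewrite -[T in f T](subrK (emb (T ord0))) (dualD _ _ fd).
by rewrite f_flat ?add0r // !ffunE eqxx subrr.
Qed.

Lemma Jset_emb z : `|z| = 1 -> Jset N (emb z) = ext @` Jset nY z.
Proof.
move=> z1; apply/seteqP; split=> [f Jf | _ [h Jh <-]]; last exact/Jset_ext.
have fE := Jset_emb_factor z1 Jf.
by exists (fun y => f (emb y)); rewrite -?fE //; apply/Jset_ext; rewrite -fE.
Qed.

Lemma eps_smooth_emb eps z : `|z| = 1 ->
  eps_smooth_elt N eps (emb z) <-> eps_smooth_elt nY eps z.
Proof.
move=> z1; rewrite /eps_smooth_elt Jset_emb // -propeqE.
congr (sup _ <= _); apply/seteqP; split.
  move=> _ [_ [h Jh <-] [_ [k Jk <-] <-]]; exists h => //; exists k => //.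
  exact: esym (fnorm_ext (fun y => h y - k y)).
move=> _ [h Jh [k Jk <-]]; exists (ext h); first by exists h.
by exists (ext k); [exists k | exact: fnorm_ext (fun y => h y - k y)].
Qed.

Lemma smooth_emb z : `|z| = 1 -> smooth_elt N (emb z) -> smooth_elt nY z.
Proof.
move=> z1 [f Jf]; rewrite Jset_emb // in Jf.
have [h Jh hf] : (ext @` Jset nY z) f by rewrite Jf.
exists h; apply/seteqP; split=> [k Jk | _ ->] //=.
have : (ext @` Jset nY z) (ext k) by exists k.
by rewrite Jf -hf => /ext_inj.
Qed.

End FirstColumn.

Theorem theorem3p6 (R : realType) (Y : normedModType R) (n : nat) :
  (0 < n)%N ->
  (forall T : {ffun 'I_n -> Y}, T != 0 ->
     approx_smooth_elt (@opnorm_l1 R Y n) T -> smooth_elt (@opnorm_l1 R Y n) T) ->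
  smooth_space (@Num.norm R Y) \/ ~ approx_smooth_space (@Num.norm R Y).
Proof.
case: n => // n _ smoothT.
have [[eps [eps_range Y_eps]]|] := pselect (approx_smooth_space (@Num.norm R Y)).
  left => z z1; apply: (smooth_emb z1); apply: smoothT.
    by rewrite emb_eq0 -normr_eq0 z1 oner_neq0.
  by exists eps; split => //; apply/(eps_smooth_emb n eps z1); exact: Y_eps.
by right.
Qed.
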